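(* For every proper $S_0$-invariant subgroup $H$ of $E$, the set $\mathcal C_H=\{p\in P : \pi(w(p,\ell))\in H \text{ for some labelling } \ell \text{ of } p\}$ is a simplifiable hyperoctahedral category of partitions.
   Context: A partition $p\in P(k,l)$ ($k,l\ge 0$) is a partition of the disjoint union of $k$ ordered upper points $1,\dots,k$ and $l$ ordered lower points $1',\dots,l'$ into nonempty disjoint subsets called blocks; $P=\bigcup_{k,l}P(k,l)$. Operations on partitions: the tensor product $p\otimes q$ (horizontal juxtaposition, $q$ placed to the right of $p$); the composition of $p\in P(k,l)$ with $q\in P(l,m)$ (stack $p$ on top of $q$, identify the lower points of $p$ with the upper points of $q$, merge blocks connected through these middle points, then erase the middle points and any block lying entirely among them), giving a partition in $P(k,m)$; the involution $p^*$ (reflection of $p$ upside down); and rotation (moving the leftmost, resp. rightmost, point of one row to the leftmost, resp. rightmost, position of the other row, keeping the blocks). A category of partitions is a subset $\mathcal C\subseteq P$ containing the pair partition $\sqcap\in P(0,2)$ (one block consisting of two lower points) and the identity partition $|\in P(1,1)$ (one block $\{1,1'\}$), and closed under these four operations. Special partitions: the four block $b_4\in P(0,4)$ (one block of four lower points); the double singleton $\uparrow\otimes\uparrow\in P(0,2)$ (two one-point blocks); the pair positioner $\rho\in P(3,3)$ with blocks $\{1,2,2',3'\}$ and $\{3,1'\}$. A category of partitions $\mathcal C$ is hyperoctahedral if $b_4\in\mathcal C$ and $\uparrow\otimes\uparrow\notin\mathcal C$; it is simplifiable hyperoctahedral if moreover $\rho\in\mathcal C$. Let $L=\{a_1,a_2,\dots\}$,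 $\mathbb F_L$ the free group on $L$, $G=\mathbb Z_2^{*\infty}$ the free product of countably many copies of $\mathbb Z/2\mathbb Z$ generated by $a_1,a_2,\dots$ with $a_i^2=e$, and $\pi:\mathbb F_L\to G$ the canonical surjection. A labelling $\ell$ of a partition $p$ assigns pairwise distinct letters of $L$ to the blocks of $p$; $w(p,\ell)\in\mathbb F_L$ is the word obtained by reading the labels of the points of $p$ starting at the leftmost upper point, going through the upper row from left to right and then through the lower row from right to left. $E\le G$ is the subgroup of elements of even length. $S_0\subseteq\mathrm{End}(G)$ is the subsemigroup generated by: (1) for every $n\in\mathbb N$ and every choice of indices $i(1),\dots,i(n)$, the endomorphism with $a_k\mapsto a_{i(k)}$ for $1\le k\le n$ and $a_k\mapsto a_k$ for $k>n$; (2) for every $k$, the conjugation $w\mapsto a_kwa_k$. A subgroup $H$ is $S_0$-invariant if $\phi(H)\subseteq H$ for all $\phi\in S_0$. *)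

From mathcomp Require Import all_boot.
Set Implicit Arguments. Unset Strict Implicit. Unset Printing Implicit Defensive.

(* Partitions.  The points of a diagram in P(k,l): upper points 'I_k   *)
(* (left to right), lower points 'I_l (left to right).                 *)
(* A (raw) diagram is a boolean relation on its points; it is a        *)
(* partition when this relation is an equivalence relation (its        *)
(* classes are the blocks).                                            *)
Definition pt (k l : nat) : finType := ('I_k + 'I_l)%type.
Definition prel (k l : nat) := {ffun pt k l * pt k l -> bool}.

Definition is_partition k l (p : prel k l) : bool :=
  [&& [forall x, p (x, x)],
      [forall x, forall y, p (x, y) ==> p (y, x)] &
      [forall x, forall y, forall z, p (x, y) ==> p (y, z) ==> p (x, z)]].

Definition prel_of_cls k l (c : pt k l -> nat) : prel k l :=
  [ffun xy => c xy.1 == c xy.2].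

Definition pullback k l k' l' (f : pt k' l' -> pt k l) (p : prel k l)
  : prel k' l' := [ffun xy => p (f xy.1, f xy.2)].

(* tensor product: q placed to the right of p *)
Definition tsplit k l k' l' (x : pt (k + k') (l + l'))
  : (pt k l + pt k' l')%type :=
  match x with
  | inl i => match split i with inl a => inl (inl a) | inr b => inr (inl b) end
  | inr j => match split j with inl a => inl (inr a) | inr b => inr (inr b) end
  end.

Definition tensor k l k' l' (p : prel k l) (q : prel k' l')
  : prel (k + k') (l + l') :=
  [ffun xy : pt (k + k') (l + l') * pt (k + k') (l + l') => match @tsplit k l k' l' xy.1, @tsplit k l k' l' xy.2 with
              | inl a, inl b => p (a, b)
              | inr a, inr b => q (a, b)
              | _, _ => false
              end].

Definition swap_pt k l (x : pt l k) : pt k l :=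
  match x with inl i => inr i | inr j => inl j end.
Definition star k l (p : prel k l) : prel l k := pullback (@swap_pt k l) p.

(* composition: p on top of q, middle points identified, blocks merged
   through the middle points (transitive closure), middle points erased *)
Section Comp.
Variables (k l m : nat).
Definition cpt : finType := (('I_k + 'I_l) + 'I_m)%type.
Definition c_top (u : cpt) : option (pt k l) :=
  match u with inl v => Some v | inr _ => None end.
Definition c_bot (u : cpt) : option (pt l m) :=
  match u with
  | inl (inl _) => None | inl (inr j) => Some (inl j) | inr t => Some (inr t)
  end.
Definition c_edge (p : prel k l) (q : prel l m) : rel cpt :=
  fun u v =>
    (match c_top u, c_top v with Some x, Some y => p (x, y) | _, _ => false end)
    || (match c_bot u, c_bot v with Some x, Some y => q (x, y) | _, _ => false end).
Definition c_out (x : pt k m) : cpt :=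
  match x with inl i => inl (inl i) | inr t => inr t end.
Definition comp (p : prel k l) (q : prel l m) : prel k m :=
  [ffun xy => connect (c_edge p q) (c_out xy.1) (c_out xy.2)].
End Comp.

(* leftmost upper point -> leftmost lower point : P(k+1,l) -> P(k,l+1) *)
Definition rotUL_map k l (x : pt k l.+1) : pt k.+1 l :=
  match x with
  | inl i => inl (lift (@ord0 k) i)
  | inr j => match unlift (@ord0 l) j with None => inl ord0 | Some j' => inr j' end
  end.
Definition rotUL k l (p : prel k.+1 l) : prel k l.+1 := pullback (@rotUL_map k l) p.

(* leftmost lower point -> leftmost upper point : P(k,l+1) -> P(k+1,l) *)
Definition rotLU_map k l (x : pt k.+1 l) : pt k l.+1 :=
  match x with
  | inr j => inr (lift (@ord0 l) j)
  | inl i => match unlift (@ord0 k) i with None => inr ord0 | Some i' => inl i' end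
  end.
Definition rotLU k l (p : prel k l.+1) : prel k.+1 l := pullback (@rotLU_map k l) p.

(* rightmost upper point -> rightmost lower point : P(k+1,l) -> P(k,l+1) *)
Definition rotUR_map k l (x : pt k l.+1) : pt k.+1 l :=
  match x with
  | inl i => inl (lift (@ord_max k) i)
  | inr j => match unlift (@ord_max l) j with None => inl ord_max | Some j' => inr j' end
  end.
Definition rotUR k l (p : prel k.+1 l) : prel k l.+1 := pullback (@rotUR_map k l) p.

(* rightmost lower point -> rightmost upper point : P(k,l+1) -> P(k+1,l) *)
Definition rotLR_map k l (x : pt k.+1 l) : pt k l.+1 :=
  match x with
  | inr j => inr (lift (@ord_max l) j)
  | inl i => match unlift (@ord_max k) i with None => inr ord_max | Some i' => inl i' end
  end.
Definition rotLR k l (p : prel k l.+1) : prel k.+1 l := pullback (@rotLR_map k l) p.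

Definition pairP : prel 0 2 := [ffun _ => true].
Definition idP : prel 1 1 := [ffun _ => true].
Definition b4 : prel 0 4 := [ffun _ => true].
Definition dsingleton : prel 0 2 := [ffun xy => xy.1 == xy.2].
(* pair positioner: blocks {1,2,2',3'} and {3,1'} *)
Definition rho_cls (x : pt 3 3) : nat :=
  match x with
  | inl i => if val i == 2 then 1 else 0
  | inr j => if val j == 0 then 1 else 0
  end.
Definition rho : prel 3 3 := prel_of_cls rho_cls.

Definition pcat := forall k l, prel k l -> Prop.

Definition is_category (C : pcat) : Prop :=
  [/\ (forall k l (p : prel k l), C k l p -> is_partition p),
      C 0 2 pairP /\ C 1 1 idP,
      (forall k l k' l' (p : prel k l) (q : prel k' l'),
          C k l p -> C k' l' q -> C (k + k') (l + l') (tensor p q)),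
      (forall k l m (p : prel k l) (q : prel l m),
          C k l p -> C l m q -> C k m (comp p q)) /\
      (forall k l (p : prel k l), C k l p -> C l k (star p)) &
      (forall k l,
        (forall p : prel k.+1 l, C k.+1 l p ->
            C k l.+1 (rotUL p) /\ C k l.+1 (rotUR p)) /\
        (forall p : prel k l.+1, C k l.+1 p ->
            C k.+1 l (rotLU p) /\ C k.+1 l (rotLR p)))].

Definition hyperoctahedral (C : pcat) : Prop :=
  [/\ is_category C, C 0 4 b4 & ~ C 0 2 dsingleton].

Definition simplifiable_hyperoctahedral (C : pcat) : Prop :=
  hyperoctahedral C /\ C 3 3 rho.

(* The group G = Z_2^{*oo}: letters a_i indexed by i : nat; elements   *)
(* are represented by reduced words (no two equal adjacent letters).   *)
(* The canonical surjection pi of the free group, on positive words,   *)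
(* is the reduction [red].                                             *)
Fixpoint red (s : seq nat) : seq nat :=
  match s with
  | [::] => [::]
  | x :: s' => match red s' with
               | y :: t => if x == y then t else x :: y :: t
               | [::] => [:: x]
               end
  end.

Definition reduced (s : seq nat) : bool := sorted (fun a b : nat => a != b) s.

Definition gmul (s t : seq nat) : seq nat := red (s ++ t).
Definition ginv (s : seq nat) : seq nat := rev s.

Definition inE_ (s : seq nat) : bool := reduced s && ~~ odd (size s).

Definition subgroup_of_E (H : seq nat -> Prop) : Prop :=
  [/\ (forall s, H s -> inE_ s), H [::],
      (forall s t, H s -> H t -> H (gmul s t)) &
      (forall s, H s -> H (ginv s))].

Definition proper_in_E (H : seq nat -> Prop) : Prop :=
  exists s, inE_ s /\ ~ H s.

Inductive S0 : (seq nat -> seq nat) -> Prop :=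
| S0_subst (n : nat) (sigma : nat -> nat) :
    (forall i, n <= i -> sigma i = i) -> S0 (fun s => red (map sigma s))
| S0_conj (i : nat) : S0 (fun s => red (i :: s ++ [:: i]))
| S0_comp f g : S0 f -> S0 g -> S0 (fun s => f (g s)).

Definition S0_invariant (H : seq nat -> Prop) : Prop :=
  forall phi, S0 phi -> forall s, H s -> H (phi s).

Definition is_labelling k l (p : prel k l) (lab : pt k l -> nat) : Prop :=
  forall x y, lab x = lab y <-> p (x, y).

Definition word k l (lab : pt k l -> nat) : seq nat :=
  [seq lab (inl i) | i <- enum 'I_k] ++ rev [seq lab (inr j) | j <- enum 'I_l].

Definition C_H (H : seq nat -> Prop) : pcat :=
  fun k l p => is_partition p /\
    exists lab : pt k l -> nat, is_labelling p lab /\ H (red (word lab)).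

From Pilot Require Import Defs.
From mathcomp Require Import all_boot.
Set Implicit Arguments. Unset Strict Implicit.

(* Words of G = Z_2^{*oo} are handled through their reduced normal form
   [red]; we first show that [red] computes the group law: it is compatible
   with concatenation, letter cancellation, inversion (reversal) and letter
   substitutions.  For an S_0-invariant subgroup H of E this yields closure
   of H under products, inverses, conjugation by words, cyclic rotation and
   finite letter substitutions; the latter lets us replace a labelling by
   any coarser one, and shows that H = E once H contains a word a_a a_b
   with a <> b.

   Each category operation is then matched by an operation on words: the
   involution reverses the word, rotations rotate it cyclically (or leave it
   unchanged), a tensor product inserts the word of q (relabelled with fresh
   letters) between the two rows of the word of p, and a composition
   multiplies the words of the two factors, labelled by the blocks of the
   merged diagram, so that the middle row cancels.  The one-block partitions
   with an even number of points and the pair positioner have words reducing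
   to e, while the double singleton would force H = E, contradicting
   properness. *)

(* Reduction of words in Z_2^{*oo}.  [red] processes a word from the right;
   each step pushes one letter onto an already reduced word, cancelling it
   against an equal head letter. *)
Definition push (x : nat) (t : seq nat) : seq nat :=
  if t is y :: t' then (if x == y then t' else x :: y :: t') else [:: x].

Lemma red_cons x s : red (x :: s) = push x (red s).
Proof. by []. Qed.

Lemma reduced_behead x s : reduced (x :: s) -> reduced s.
Proof. by case: s => //= y s /andP[]. Qed.

Lemma reduced_push x t : reduced t -> reduced (push x t).
Proof.
case: t => [|y t] //= Ht; case: eqP => [_|/eqP ne]; first exact: reduced_behead Ht.
by rewrite /= ne.
Qed.

Lemma reduced_red s : reduced (red s).
Proof. by elim: s => // x s IH; rewrite red_cons; exact: reduced_push. Qed.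

Lemma red_reduced s : reduced s -> red s = s.
Proof.
elim: s => // x s IH Hs; rewrite /= (IH (reduced_behead Hs)).
by case: s Hs {IH} => //= y s /andP[/negbTE ->].
Qed.

Lemma red_red s : red (red s) = red s.
Proof. exact/red_reduced/reduced_red. Qed.

Lemma push_push x t : reduced t -> push x (push x t) = t.
Proof.
case: t => [|y t] /=; first by rewrite eqxx.
case: (eqVneq x y) => [<-|_] Ht; last by rewrite /= eqxx.
by case: t Ht => [|z t] //= /andP[/negbTE ->].
Qed.

Lemma red_catr s t : red (s ++ t) = red (s ++ red t).
Proof. by elim: s => [|x s IH] /=; rewrite ?red_red // IH. Qed.

Lemma red_push_cat x u t : red (push x u ++ t) = push x (red (u ++ t)).
Proof.
case: u => [|y u] //=; case: eqP => [<-|_] //.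
by rewrite push_push // reduced_red.
Qed.

Lemma red_catl s t : red (s ++ t) = red (red s ++ t).
Proof. by elim: s => //= x s IH; rewrite red_push_cat -IH. Qed.

Lemma red_xx s x t : red (s ++ x :: x :: t) = red (s ++ t).
Proof. by rewrite red_catr !red_cons push_push ?reduced_red // -red_catr. Qed.

Lemma red_nseq_double n c : red (nseq n.*2 c) = [::].
Proof. by elim: n => // n IH; rewrite doubleS -[nseq _ c]cat0s red_xx. Qed.

Lemma red_cancel s u t : red (s ++ rev u ++ u ++ t) = red (s ++ t).
Proof.
elim: u s t => [|x u IH] s t //=.
by rewrite rev_cons -cats1 -!catA /= catA red_xx -catA IH.
Qed.

Lemma reduced_rev s : reduced s -> reduced (rev s).
Proof. by rewrite /reduced rev_sorted; apply: sub_sorted => a b; rewrite eq_sym. Qed.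

Lemma red_rev s : red (rev s) = rev (red s).
Proof.
elim: s => // x s IH.
rewrite rev_cons -cats1 red_catl IH red_cons.
have : reduced (red s) := reduced_red s; case: (red s) => [|y t] //= Ht.
case: eqP => [<-|/eqP ne].
  by rewrite rev_cons -cats1 -catA -[rev t ++ _]cats0 -catA red_xx cats0
             red_reduced // reduced_rev // (reduced_behead Ht).
rewrite cats1 -rev_cons red_reduced // reduced_rev //.
by rewrite /reduced /= ne.
Qed.

Lemma red_map_push f x t : red (map f (push x t)) = push (f x) (red (map f t)).
Proof.
case: t => [|y t] //; rewrite [push x _]/=; case: eqP => [<-|_] //.
by rewrite [map f (x :: _)]/= red_cons push_push // reduced_red.
Qed.

Lemma red_map f s : red (map f (red s)) = red (map f s).
Proof. by elim: s => // x s IH; rewrite red_cons red_map_push IH. Qed.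

Section InvariantSubgroup.
Variable H : seq nat -> Prop.
Hypothesis H_subgroup : subgroup_of_E H.
Hypothesis H_invariant : S0_invariant H.

Lemma H_nil : H [::].
Proof. by case: H_subgroup. Qed.

Lemma H_mul a b : H (red a) -> H (red b) -> H (red (a ++ b)).
Proof.
case: H_subgroup => _ _ Hmul _ Ha Hb.
by have := Hmul _ _ Ha Hb; rewrite /gmul -red_catl -red_catr.
Qed.

Lemma H_rev a : H (red a) -> H (red (rev a)).
Proof. by case: H_subgroup => _ _ _ Hinv /Hinv; rewrite /ginv red_rev. Qed.

Lemma H_subst n (sigma : nat -> nat) s :
  (forall i, n <= i -> sigma i = i) -> H (red s) -> H (red (map sigma s)).
Proof. by move=> fix_sigma /(H_invariant (S0_subst fix_sigma)); rewrite red_map. Qed.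

Lemma H_conj1 x w : H (red w) -> H (red (x :: w ++ [:: x])).
Proof. by move/(H_invariant (S0_conj x)); rewrite red_cons -red_catl. Qed.

Lemma H_conj u w : H (red w) -> H (red (u ++ w ++ rev u)).
Proof.
elim: u => [|x u IH] Hw /=; first by rewrite cats0.
by have := H_conj1 x (IH Hw); rewrite rev_cons -cats1 !catA.
Qed.

Lemma H_rot1 s : H (red s) -> H (red (rot 1 s)).
Proof.
case: s => [|x w] // /(H_conj1 x).
by rewrite -[x :: _]cat0s red_xx rot1_cons -cats1.
Qed.

Lemma H_rotr1 s : H (red s) -> H (red (rotr 1 s)).
Proof.
case/lastP: s => [|w x] // /(H_conj1 x).
by rewrite rotr1_rcons -cats1 -catA -cat_cons red_xx cats0.
Qed.

Lemma H_pairs (a b : nat) :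
  a != b -> H [:: a; b] -> forall x y, x != y -> H [:: x; y].
Proof.
move=> ab Hab x y xy.
pose sigma c := if c == a then x else if c == b then y else c.
have fix_sigma i : (maxn a b).+1 <= i -> sigma i = i.
  rewrite gtn_max /sigma => /andP[lt_ai lt_bi].
  by rewrite (gtn_eqF lt_ai) (gtn_eqF lt_bi).
have /(H_subst fix_sigma) : H (red [:: a; b]) by rewrite red_reduced //= ab.
by rewrite /= /sigma eqxx [b == a]eq_sym (negbTE ab) eqxx (negbTE xy).
Qed.

Lemma H_full (a b : nat) : a != b -> H [:: a; b] -> forall s, inE_ s -> H s.
Proof.
move=> ab /(H_pairs ab) Hpair s /andP[rs ev].
have [n size_s] : exists n, size s = n.*2.
  by exists (size s)./2; rewrite -{1}(odd_double_half (size s)) (negbTE ev).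
elim: n s size_s rs {ev} => [|n IH] [|x [|y s]] //=.
  by move=> _ _; exact: H_nil.
rewrite doubleS => -[size_s] /andP[xy rys].
have rs : reduced s := reduced_behead rys.
have := H_mul (a := [:: x; y]) (b := s).
rewrite !red_reduced //= ?xy //; apply; [exact: Hpair | exact: IH].
Qed.

End InvariantSubgroup.

Lemma labelling_partition k l (p : prel k l) lab :
  is_labelling p lab -> is_partition p.
Proof.
move=> L; apply/and3P; split.
- by apply/forallP => x; apply/L.
- by do 2![apply/forallP => ?]; apply/implyP => /L E; apply/L.
- do 3![apply/forallP => ?]; apply/implyP => /L E1; apply/implyP => /L E2.
  by apply/L; rewrite E1.
Qed.

Lemma labelling_sym k l (p : prel k l) lab :
  is_labelling p lab -> forall x y, p (x, y) = p (y, x).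
Proof. by move=> L x y; apply/idP/idP => /L E; apply/L. Qed.

Lemma pullback_labelling k l k' l' (f : pt k' l' -> pt k l) (p : prel k l) lab :
  is_labelling p lab -> is_labelling (pullback f p) (fun x => lab (f x)).
Proof. by move=> L x y; rewrite ffunE; exact: L. Qed.

Lemma word_map k l (f : nat -> nat) (lab : pt k l -> nat) :
  map f (word lab) = word (fun x => f (lab x)).
Proof. by rewrite /word map_cat map_rev -!map_comp. Qed.

Lemma eq_word k l (f g : pt k l -> nat) : f =1 g -> word f = word g.
Proof.
by move=> E; rewrite /word (eq_map (fun i => E (inl i))) (eq_map (fun j => E (inr j))).
Qed.

Lemma labels_bounded k l (lab : pt k l -> nat) : exists n, forall x, lab x < n.
Proof. by exists (\max_x (lab x).+1) => x; exact: (leq_bigmax x). Qed.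

(* In an S_0-invariant H, a labelling may be replaced by any coarser one:
   the new labels are the image of the old ones under a substitution of
   finitely many letters. *)
Lemma H_relabel H (H_invariant : S0_invariant H) k l (lab g : pt k l -> nat) :
  H (red (word lab)) -> (forall x y, lab x = lab y -> g x = g y) ->
  H (red (word g)).
Proof.
move=> Hw g_coarser; have [n lab_lt] := labels_bounded lab.
pose sigma c := if [pick x | lab x == c] is Some x then g x else c.
have fix_sigma i : n <= i -> sigma i = i.
  rewrite /sigma; case: pickP => // x /eqP <-.
  by rewrite leqNgt lab_lt.
have sigma_lab x : sigma (lab x) = g x.
  rewrite /sigma; case: pickP => [y /eqP /g_coarser // | /(_ x)].
  by rewrite eqxx.
have := H_subst H_invariant fix_sigma Hw.
by rewrite word_map (eq_word sigma_lab).
Qed.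

Lemma C_H_intro H k l (p : prel k l) lab :
  is_labelling p lab -> H (red (word lab)) -> C_H H p.
Proof. by move=> L Hw; split; [exact: labelling_partition L | exists lab]. Qed.

Lemma C_H_pullback H k l k' l' (f : pt k' l' -> pt k l) (p : prel k l) :
  (forall lab, H (red (word lab)) -> H (red (word (fun x => lab (f x))))) ->
  C_H H p -> C_H H (pullback f p).
Proof.
move=> Hf [_ [lab [L Hw]]].
exact: C_H_intro (pullback_labelling f L) (Hf _ Hw).
Qed.

Lemma map_enum_ordSl T n (f : 'I_n.+1 -> T) :
  [seq f i | i <- enum 'I_n.+1] = f ord0 :: [seq f (lift ord0 i) | i <- enum 'I_n].
Proof. by rewrite enum_ordSl /= -map_comp. Qed.

Lemma map_enum_ordSr T n (f : 'I_n.+1 -> T) :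
  [seq f i | i <- enum 'I_n.+1] =
  rcons [seq f (lift ord_max i) | i <- enum 'I_n] (f ord_max).
Proof.
rewrite enum_ordSr map_rcons -map_comp; congr rcons; apply: eq_map => i /=.
by congr f; apply: val_inj; exact: (esym (lift_max i)).
Qed.

Lemma word_star k l (lab : pt k l -> nat) :
  word (fun x => lab (@swap_pt k l x)) = rev (word lab).
Proof. by rewrite /word rev_cat revK. Qed.

Lemma word_rotUL k l (lab : pt k.+1 l -> nat) :
  word (fun x => lab (@rotUL_map k l x)) = rot 1 (word lab).
Proof.
rewrite /word [in RHS]map_enum_ordSl [X in rev X]map_enum_ordSl /= unlift_none.
rewrite rot1_cons rev_cons rcons_cat; congr (_ ++ rcons (rev _) _).
by apply: eq_map => j; rewrite /= liftK.
Qed.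

Lemma word_rotUR k l (lab : pt k.+1 l -> nat) :
  word (fun x => lab (@rotUR_map k l x)) = word lab.
Proof.
rewrite /word [in RHS]map_enum_ordSr [X in rev X]map_enum_ordSr /= unlift_none.
rewrite rev_rcons cat_rcons; congr (_ ++ _ :: rev _).
by apply: eq_map => j; rewrite /= liftK.
Qed.

Lemma word_rotLU k l (lab : pt k l.+1 -> nat) :
  rot 1 (word (fun x => lab (@rotLU_map k l x))) = word lab.
Proof.
rewrite /word map_enum_ordSl [in RHS]map_enum_ordSl /= unlift_none.
rewrite rot1_cons rev_cons rcons_cat; congr (_ ++ rcons (rev _) _).
by apply: eq_map => j; rewrite /= liftK.
Qed.

Lemma word_rotLR k l (lab : pt k l.+1 -> nat) :
  word (fun x => lab (@rotLR_map k l x)) = word lab.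
Proof.
rewrite /word map_enum_ordSr [in RHS]map_enum_ordSr /= unlift_none.
rewrite rev_rcons cat_rcons; congr (_ ++ _ :: rev _).
by apply: eq_map => j; rewrite /= liftK.
Qed.

Lemma map_enum_ordD T m n (f : 'I_(m + n) -> T) :
  [seq f i | i <- enum 'I_(m + n)] =
  [seq f (lshift n i) | i <- enum 'I_m] ++ [seq f (rshift m i) | i <- enum 'I_n].
Proof.
suff -> : enum 'I_(m + n) =
           map (@lshift m n) (enum 'I_m) ++ map (@rshift m n) (enum 'I_n).
  by rewrite map_cat -!map_comp.
apply: (inj_map val_inj); rewrite val_enum_ord map_cat iotaD add0n.
congr (_ ++ _); first by rewrite -(val_enum_ord m); elim: (enum 'I_m) => //= i s ->.
rewrite -[m in iota m]addn0 iotaDl -(val_enum_ord n).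
by elim: (enum 'I_n) => //= i s ->.
Qed.

Definition tensor_lab k l k' l' (f : pt k l -> nat) (g : pt k' l' -> nat)
  (x : pt (k + k') (l + l')) : nat :=
  match tsplit x with inl a => f a | inr b => g b end.

Lemma tensor_labelling k l k' l' (p : prel k l) (q : prel k' l') f g :
  is_labelling p f -> is_labelling q g -> (forall a b, f a <> g b) ->
  is_labelling (tensor p q) (tensor_lab f g).
Proof.
move=> Lp Lq disj x y; rewrite ffunE /tensor_lab /=.
case: (tsplit x) => a; case: (tsplit y) => b //; split=> // E.
- by case: (disj a b).
- by case: (disj b a).
Qed.

Lemma split_lshift m n (i : 'I_m) : split (lshift n i) = inl i.
Proof. exact: (unsplitK (inl i)). Qed.

Lemma split_rshift m n (i : 'I_n) : split (rshift m i) = inr i.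
Proof. exact: (unsplitK (inr i)). Qed.

Lemma word_tensor k l k' l' (f : pt k l -> nat) (g : pt k' l' -> nat) :
  word (tensor_lab f g) =
  [seq f (inl i) | i <- enum 'I_k] ++ word g ++ rev [seq f (inr j) | j <- enum 'I_l].
Proof.
rewrite /word !map_enum_ordD rev_cat /tensor_lab -!catA.
by congr (_ ++ _ ++ rev _ ++ rev _); apply: eq_map => i;
  rewrite /= ?split_lshift ?split_rshift.
Qed.

Lemma connect_class_index (T : finType) (e : rel T) : connect_sym e ->
  exists r : T -> nat, forall u v, r u = r v <-> connect e u v.
Proof.
move=> e_sym; exists (fun u => val (enum_rank (root e u))) => u v.
by split=> [/val_inj/enum_rank_inj/(rootP e_sym) | /(rootP e_sym) ->].
Qed.

Lemma map_const_nseq (T U : Type) (c : U) (s : seq T) :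
  [seq c | _ <- s] = nseq (size s) c.
Proof. by elim: s => //= x s ->. Qed.

Lemma word_const k l c : word (fun _ : pt k l => c) = nseq (k + l) c.
Proof. by rewrite /word !map_const_nseq !size_enum_ord rev_nseq nseqD. Qed.

Section CategoryOfH.
Variable H : seq nat -> Prop.
Hypothesis H_subgroup : subgroup_of_E H.
Hypothesis H_invariant : S0_invariant H.

(* Label q with fresh letters, then conjugate its word by the upper row of
   p and multiply by the word of p: the upper row cancels. *)
Lemma tensor_closed k l k' l' (p : prel k l) (q : prel k' l') :
  C_H H p -> C_H H q -> C_H H (tensor p q).
Proof.
move=> [_ [f [Lf Hf]]] [_ [g [Lg Hg]]].
have [M f_lt] := labels_bounded f.
pose g' y := g y + M.
have Lg' : is_labelling q g'.
  by move=> x y; split=> [/addIn /Lg | /Lg E]; rewrite /g' ?E.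
have Hg' : H (red (word g')).
  by apply: (H_relabel H_invariant Hg) => x y; rewrite /g' => ->.
have disj a b : f a <> g' b.
  by move=> E; have := f_lt a; rewrite E /g' ltnNge leq_addl.
apply: (C_H_intro (tensor_labelling Lf Lg' disj)); rewrite word_tensor.
set U := [seq f (inl i) | i <- enum 'I_k]; set D := [seq f (inr j) | j <- enum 'I_l].
have := H_mul H_subgroup (H_conj H_invariant U Hg') Hf.
by rewrite (catA U) -catA [word f]/word -/U -/D red_cancel catA.
Qed.

Definition c_in_bot k l m (y : pt l m) : cpt k l m :=
  match y with inl j => inl (inr j) | inr t => inr t end.

(* Label both factors by the blocks of the merged diagram; the two words
   share the middle row, which cancels in their product. *)
Lemma comp_closed k l m (p : prel k l) (q : prel l m) :
  C_H H p -> C_H H q -> C_H H (Defs.comp p q).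
Proof.
move=> [_ [f [Lf Hf]]] [_ [g [Lg Hg]]].
pose e := c_edge p q.
have e_sym : connect_sym e.
  apply: sym_connect_sym => u v; rewrite /e /c_edge.
  by case: (c_top u) => [x|]; case: (c_top v) => [y|];
     rewrite ?(labelling_sym Lf x y) //;
     case: (c_bot u) => [x'|]; case: (c_bot v) => [y'|];
     rewrite ?(labelling_sym Lg x' y').
have [r rP] := connect_class_index e_sym.
have Lcomp : is_labelling (Defs.comp p q) (fun x => r (@c_out k l m x)).
  by move=> x y; rewrite ffunE; exact: rP.
have Htop : H (red (word (fun x => r (inl x)))).
  apply: (H_relabel H_invariant Hf) => x y /Lf pxy; apply/rP/connect1.
  by rewrite /e /c_edge /= pxy.
have Hbot : H (red (word (fun y => r (@c_in_bot k l m y)))).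
  apply: (H_relabel H_invariant Hg) => x y /Lg qxy; apply/rP/connect1.
  have c_in_botK z : c_bot (@c_in_bot k l m z) = Some z by case: z.
  by rewrite /e /c_edge !c_in_botK qxy orbT.
apply: (C_H_intro Lcomp).
by have := H_mul H_subgroup Htop Hbot; rewrite /word -catA red_cancel.
Qed.

Lemma star_closed k l (p : prel k l) : C_H H p -> C_H H (star p).
Proof.
by apply: C_H_pullback => lab; rewrite word_star; exact: H_rev.
Qed.

Lemma rot_closed k l :
  (forall p : prel k.+1 l, C_H H p -> C_H H (rotUL p) /\ C_H H (rotUR p)) /\
  (forall p : prel k l.+1, C_H H p -> C_H H (rotLU p) /\ C_H H (rotLR p)).
Proof.
split=> p Cp; split; apply: C_H_pullback Cp => lab.
- by rewrite word_rotUL; exact: H_rot1.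
- by rewrite word_rotUR.
- by move/(H_rotr1 H_invariant); rewrite -word_rotLU rotK.
- by rewrite word_rotLR.
Qed.

Lemma one_block_closed k l (p : prel k l) :
  (forall xy, p xy) -> ~~ odd (k + l) -> C_H H p.
Proof.
move=> p_full even_kl; apply: (C_H_intro (lab := fun _ => 0)).
  by move=> x y; rewrite p_full.
rewrite word_const -(odd_double_half (k + l)) (negbTE even_kl) add0n.
by rewrite red_nseq_double; exact: H_nil.
Qed.

(* the word of the pair positioner, a_0 a_0 a_1 a_0 a_0 a_1, reduces to e *)
Lemma rho_closed : C_H H rho.
Proof.
apply: (C_H_intro (lab := rho_cls)).
  by move=> x y; rewrite ffunE /=; split=> [-> | /eqP].
by rewrite /word !map_enum_ordSl enum_ord0; exact: H_nil.
Qed.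

(* a labelling of the double singleton exhibits a word a_b a_a, a <> b, in H,
   which would force H = E *)
Lemma dsingleton_not_closed : proper_in_E H -> ~ C_H H dsingleton.
Proof.
move=> [s [Es notHs]] [_ [lab [L Hw]]]; apply: notHs.
set a := lab (inr ord0); set b := lab (inr (lift ord0 ord0)).
have ba : b != a by apply/eqP => /L; rewrite ffunE.
move: Hw; rewrite /word !map_enum_ordSl !enum_ord0 /= -/a -/b (negbTE ba).
by move/(H_full H_subgroup H_invariant ba); apply.
Qed.

End CategoryOfH.

Unset Implicit Arguments.
Set Strict Implicit.

Theorem mainTheorem7 (H : seq nat -> Prop) :
  subgroup_of_E H -> proper_in_E H -> S0_invariant H ->
  simplifiable_hyperoctahedral (C_H H).
Proof.
move=> H_subgroup H_proper H_invariant.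
have one_block k l (p : prel k l) :
    p = [ffun _ => true] -> ~~ odd (k + l) -> C_H H p.
  by move=> ->; apply: one_block_closed => // xy; rewrite ffunE.
split; first split; first split.
- by move=> k l p [].
- by split; apply: one_block.
- by move=> k l k' l' p q; apply: tensor_closed.
- by split=> [k l m p q | k l p]; [apply: comp_closed | apply: star_closed].
- by move=> k l; apply: rot_closed.
- exact: one_block.
- exact: dsingleton_not_closed.
- exact: rho_closed.
Qed.
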